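(* The category $\sigma\mathbb{RS}$ of Dedekind $\sigma$-complete Riesz spaces with $\sigma$-continuous Riesz morphisms is isomorphic to the variety $\mathcal{V}_{\sigma\mathbb{RS}}$: the functor $T\colon\mathcal{V}_{\sigma\mathbb{RS}}\to\sigma\mathbb{RS}$ forgetting $\bigvee^-$ (identity on maps) and the functor $E\colon\sigma\mathbb{RS}\to\mathcal{V}_{\sigma\mathbb{RS}}$ adding $\bigvee^-(g,f_1,f_2,\dots):=\sup_{n\ge1}\{f_n\wedge g\}$ (identity on maps) are well defined and mutually inverse. In particular the category of Dedekind $\sigma$-complete Riesz spaces is an infinitary variety.
   Context: A Riesz space is Dedekind $\sigma$-complete if every countable subset with an upper bound has a supremum; a Riesz morphism (linear lattice homomorphism) is $\sigma$-continuous if it preserves all existing countable suprema. $\mathcal{V}_{\sigma\mathbb{RS}}$ is the infinitary variety of algebras with the Riesz space operations ($0,+,-,\vee,\wedge$ and scalar multiplications $\lambda\cdot-$ for $\lambda\in\mathbb{R}$) plus an operation $\bigvee^-$ of countably infinite arity, writing $\bigvee_{n\ge1}^g f_n:=\bigvee^-(g,f_1,f_2,\dots)$, satisfying the Riesz space axioms and (A1) $\bigvee_{n\ge1}^g f_n=\bigvee_{n\ge1}^g(f_n\wedge g)$; (A2) $\bigvee_{n\ge1}^g f_n=(f_1\wedge g)\vee\bigvee^-(g,f_2,f_3,\dots)$; (A3) $\bigvee_{n\ge1}^g(f_n\wedge h)\le h$ ($a\le b$ meaning $a\wedge b=a$). Morphisms preserve all operations. *)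

From Stdlib Require Import Reals ClassicalEpsilon.
Open Scope R_scope.

Record RieszOps (X : Type) : Type := {
  rzero : X;
  radd : X -> X -> X;
  ropp : X -> X;
  rjoin : X -> X -> X;
  rmeet : X -> X -> X;
  rscale : R -> X -> X
}.
Arguments rzero {X} _.
Arguments radd {X} _ _ _.
Arguments ropp {X} _ _.
Arguments rjoin {X} _ _ _.
Arguments rmeet {X} _ _ _.
Arguments rscale {X} _ _ _.

Definition rle {X} (o : RieszOps X) (a b : X) : Prop := rmeet o a b = a.

Definition is_riesz_space {X} (o : RieszOps X) : Prop :=
  (forall x y z, radd o x (radd o y z) = radd o (radd o x y) z) /\
  (forall x y, radd o x y = radd o y x) /\
  (forall x, radd o (rzero o) x = x) /\
  (forall x, radd o x (ropp o x) = rzero o) /\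
  (forall a x y, rscale o a (radd o x y) = radd o (rscale o a x) (rscale o a y)) /\
  (forall a b x, rscale o (a + b) x = radd o (rscale o a x) (rscale o b x)) /\
  (forall a b x, rscale o (a * b) x = rscale o a (rscale o b x)) /\
  (forall x, rscale o 1 x = x) /\
  (forall x y z, rmeet o x (rmeet o y z) = rmeet o (rmeet o x y) z) /\
  (forall x y z, rjoin o x (rjoin o y z) = rjoin o (rjoin o x y) z) /\
  (forall x y, rmeet o x y = rmeet o y x) /\
  (forall x y, rjoin o x y = rjoin o y x) /\
  (forall x y, rmeet o x (rjoin o x y) = x) /\
  (forall x y, rjoin o x (rmeet o x y) = x) /\
  (forall x y z, rle o x y -> rle o (radd o x z) (radd o y z)) /\
  (forall a x y, 0 <= a -> rle o x y -> rle o (rscale o a x) (rscale o a y)).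

Definition is_sup {X} (o : RieszOps X) (f : nat -> X) (s : X) : Prop :=
  (forall n, rle o (f n) s) /\
  (forall u, (forall n, rle o (f n) u) -> rle o s u).

(* Dedekind sigma-complete: every bounded-above countable (nonempty) subset,
   given as the range of a sequence, has a supremum *)
Definition sigma_complete {X} (o : RieszOps X) : Prop :=
  forall f : nat -> X, (exists u, forall n, rle o (f n) u) -> exists s, is_sup o f s.

Definition riesz_morphism {X Y} (oX : RieszOps X) (oY : RieszOps Y) (h : X -> Y) : Prop :=
  (forall x y, h (radd oX x y) = radd oY (h x) (h y)) /\
  (forall a x, h (rscale oX a x) = rscale oY a (h x)) /\
  (forall x y, h (rjoin oX x y) = rjoin oY (h x) (h y)) /\
  (forall x y, h (rmeet oX x y) = rmeet oY (h x) (h y)).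

Definition sigma_continuous {X Y} (oX : RieszOps X) (oY : RieszOps Y) (h : X -> Y) : Prop :=
  forall (f : nat -> X) (s : X), is_sup oX f s -> is_sup oY (fun n => h (f n)) (h s).

(* The countably-infinitary operation: bv g f = \bigvee^-(g, f_1, f_2, ...),
   with f_{n+1} represented as f n. *)
Definition BvOp (X : Type) : Type := X -> (nat -> X) -> X.

Definition is_V_algebra {X} (o : RieszOps X) (bv : BvOp X) : Prop :=
  is_riesz_space o /\
  (* (A1) *) (forall g f, bv g f = bv g (fun n => rmeet o (f n) g)) /\
  (* (A2) *) (forall g f, bv g f = rjoin o (rmeet o (f 0%nat) g) (bv g (fun n => f (S n)))) /\
  (* (A3) *) (forall g h f, rle o (bv g (fun n => rmeet o (f n) h)) h).

Definition V_hom {X Y} (oX : RieszOps X) (bvX : BvOp X) (oY : RieszOps Y) (bvY : BvOp Y)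
    (h : X -> Y) : Prop :=
  h (rzero oX) = rzero oY /\
  (forall x y, h (radd oX x y) = radd oY (h x) (h y)) /\
  (forall x, h (ropp oX x) = ropp oY (h x)) /\
  (forall x y, h (rjoin oX x y) = rjoin oY (h x) (h y)) /\
  (forall x y, h (rmeet oX x y) = rmeet oY (h x) (h y)) /\
  (forall a x, h (rscale oX a x) = rscale oY a (h x)) /\
  (forall g f, h (bvX g f) = bvY (h g) (fun n => h (f n))).

(* The functor E on objects: bv g f := sup_n (f_n /\ g) (chosen by epsilon;
   it is the supremum whenever that exists, which it does in a sigma-complete space). *)
Definition E_bv {X} (o : RieszOps X) : BvOp X :=
  fun g f => epsilon (inhabits g) (fun s => is_sup o (fun n => rmeet o (f n) g) s).

From Stdlib Require Import Reals ClassicalEpsilon FunctionalExtensionality.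
Open Scope R_scope.

(* In a V-algebra, (A2) unfolds bv g f to the join of the first n terms f_k /\ g and
   of bv applied to the tail, so bv g f is an upper bound of the f_n /\ g; (A1) and (A3)
   say that it lies below every upper bound h of them.  Hence bv g f is the supremum
   sup_n (f_n /\ g), which for f bounded by g is sup_n f_n.  Everything follows:
   sigma-completeness, E (T A) = A by uniqueness of suprema, and preservation of bv is
   the same thing as sigma-continuity. *)

Section RieszSpaceLattice.
Context {X : Type} (o : RieszOps X) (Ho : is_riesz_space o).

Lemma riesz_lattice_axioms :
  (forall x y z, rmeet o x (rmeet o y z) = rmeet o (rmeet o x y) z) /\
  (forall x y z, rjoin o x (rjoin o y z) = rjoin o (rjoin o x y) z) /\
  (forall x y, rmeet o x y = rmeet o y x) /\
  (forall x y, rjoin o x y = rjoin o y x) /\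
  (forall x y, rmeet o x (rjoin o x y) = x) /\
  (forall x y, rjoin o x (rmeet o x y) = x).
Proof. destruct Ho as (_ & _ & _ & _ & _ & _ & _ & _ & H); tauto. Qed.

Lemma rle_refl x : rle o x x.
Proof.
  destruct riesz_lattice_axioms as (_ & _ & _ & _ & meetJ & joinM); unfold rle.
  rewrite <- (joinM x x) at 2; apply meetJ.
Qed.

Lemma rle_antisym x y : rle o x y -> rle o y x -> x = y.
Proof.
  destruct riesz_lattice_axioms as (_ & _ & meetC & _); unfold rle.
  intros Hxy Hyx; rewrite <- Hxy, meetC; exact Hyx.
Qed.

Lemma rle_trans x y z : rle o x y -> rle o y z -> rle o x z.
Proof.
  destruct riesz_lattice_axioms as (meetA & _); unfold rle.
  intros Hxy Hyz; rewrite <- Hxy, <- meetA, Hyz; reflexivity.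
Qed.

Lemma rmeet_lel x y : rle o (rmeet o x y) x.
Proof.
  destruct riesz_lattice_axioms as (meetA & _ & meetC & _); unfold rle.
  rewrite (meetC x y), <- meetA, (rle_refl x); reflexivity.
Qed.

Lemma rmeet_ler x y : rle o (rmeet o x y) y.
Proof.
  destruct riesz_lattice_axioms as (_ & _ & meetC & _).
  rewrite meetC; apply rmeet_lel.
Qed.

Lemma rle_joinE x y : rle o x y <-> rjoin o x y = y.
Proof.
  destruct riesz_lattice_axioms as (_ & _ & meetC & joinC & meetJ & joinM); unfold rle.
  split; intros E.
  - rewrite <- E, joinC, meetC; apply joinM.
  - rewrite <- E; apply meetJ.
Qed.

Lemma rjoin_gel x y : rle o x (rjoin o x y).
Proof. destruct riesz_lattice_axioms as (_ & _ & _ & _ & meetJ & _); apply meetJ. Qed.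

Lemma rjoin_ger x y : rle o y (rjoin o x y).
Proof.
  destruct riesz_lattice_axioms as (_ & _ & _ & joinC & _).
  rewrite joinC; apply rjoin_gel.
Qed.

Lemma rjoin_lub x y z : rle o x z -> rle o y z -> rle o (rjoin o x y) z.
Proof.
  destruct riesz_lattice_axioms as (_ & joinA & _).
  rewrite !rle_joinE; intros Hxz Hyz; rewrite <- joinA, Hyz, Hxz; reflexivity.
Qed.

Lemma is_sup_unique f s t : is_sup o f s -> is_sup o f t -> s = t.
Proof.
  intros [ub_s lub_s] [ub_t lub_t]; apply rle_antisym; [apply lub_s | apply lub_t]; assumption.
Qed.

Lemma rmeet_bounded_seq (f : nat -> X) u :
  (forall n, rle o (f n) u) -> (fun n => rmeet o (f n) u) = f.
Proof. intros Hf; apply functional_extensionality; intros n; apply Hf. Qed.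

Lemma is_sup_cons f s t :
  is_sup o (fun n => f (S n)) t -> rjoin o (f 0%nat) t = s -> is_sup o f s.
Proof.
  intros [ub_t lub_t] <-; split.
  - intros [|n]; [apply rjoin_gel|].
    apply rle_trans with t; [apply ub_t | apply rjoin_ger].
  - intros u Hu; apply rjoin_lub; [apply Hu | apply lub_t; intros n; apply Hu].
Qed.

End RieszSpaceLattice.

Section RieszMorphismGroup.
Context {X Y : Type} (oX : RieszOps X) (oY : RieszOps Y).
Hypotheses (HX : is_riesz_space oX) (HY : is_riesz_space oY).

Lemma radd_cancel_r a b c : radd oY a b = radd oY c b -> a = c.
Proof.
  destruct HY as (addA & addC & add0 & addN & _); intros E.
  assert (addr0 : forall x, radd oY x (rzero oY) = x) by (intros x; rewrite addC; apply add0).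
  rewrite <- (addr0 a), <- (addr0 c), <- (addN b), !addA, E; reflexivity.
Qed.

Variable h : X -> Y.
Hypothesis h_add : forall x y, h (radd oX x y) = radd oY (h x) (h y).

Lemma additive_zero : h (rzero oX) = rzero oY.
Proof.
  destruct HX as (_ & _ & add0X & _); destruct HY as (_ & _ & add0Y & _).
  apply radd_cancel_r with (h (rzero oX)).
  rewrite <- h_add, add0X, add0Y; reflexivity.
Qed.

Lemma additive_opp x : h (ropp oX x) = ropp oY (h x).
Proof.
  destruct HX as (_ & addCX & _ & addNX & _); destruct HY as (_ & addCY & _ & addNY & _).
  apply radd_cancel_r with (h x).
  rewrite <- h_add, addCX, addNX, additive_zero, addCY, addNY; reflexivity.
Qed.

End RieszMorphismGroup.

Section VAlgebra.
Context {X : Type} (o : RieszOps X) (bv : BvOp X) (HV : is_V_algebra o bv).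

Lemma V_bv_is_sup g f : is_sup o (fun n => rmeet o (f n) g) (bv g f).
Proof.
  destruct HV as (Ho & A1 & A2 & A3); split.
  - intros n; revert f; induction n as [|n IH]; intros f; rewrite A2.
    + apply rjoin_gel; exact Ho.
    + apply rle_trans with (bv g (fun n => f (S n))); [exact Ho | apply (IH (fun n => f (S n))) | apply rjoin_ger, Ho].
  - intros u Hu; rewrite A1, <- (rmeet_bounded_seq o _ u Hu); apply A3.
Qed.

Lemma V_bv_is_sup_bounded f u : (forall n, rle o (f n) u) -> is_sup o f (bv u f).
Proof. intros Hf; rewrite <- (rmeet_bounded_seq o f u Hf) at 1; apply V_bv_is_sup. Qed.

Lemma V_algebra_sigma_complete : sigma_complete o.
Proof. intros f [u Hf]; exists (bv u f); apply V_bv_is_sup_bounded, Hf. Qed.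

End VAlgebra.

Lemma V_hom_sigma_continuous {X Y} (oX : RieszOps X) bvX (oY : RieszOps Y) bvY h :
  is_V_algebra oX bvX -> is_V_algebra oY bvY -> V_hom oX bvX oY bvY h ->
  sigma_continuous oX oY h.
Proof.
  intros HX HY (_ & _ & _ & _ & h_meet & _ & h_bv) f s Hs.
  assert (Es : bvX s f = s).
  { apply (is_sup_unique oX (proj1 HX) f); [apply V_bv_is_sup_bounded; [exact HX | apply Hs] | exact Hs]. }
  rewrite <- Es, h_bv; apply V_bv_is_sup_bounded; [exact HY|].
  intros n; unfold rle; rewrite <- h_meet, (proj1 Hs n); reflexivity.
Qed.

Section SigmaCompleteRieszSpace.
Context {X : Type} (o : RieszOps X) (Ho : is_riesz_space o) (Hc : sigma_complete o).

Lemma E_bv_is_sup g f : is_sup o (fun n => rmeet o (f n) g) (E_bv o g f).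
Proof.
  apply (epsilon_spec (inhabits g) (is_sup o (fun n => rmeet o (f n) g))), Hc.
  exists g; intros n; apply rmeet_ler, Ho.
Qed.

Lemma E_V_algebra : is_V_algebra o (E_bv o).
Proof.
  split; [exact Ho | split; [| split]].
  - intros g f; unfold E_bv at 2.
    rewrite (rmeet_bounded_seq o _ g (fun n => rmeet_ler o Ho (f n) g)); reflexivity.
  - intros g f; apply (is_sup_unique o Ho (fun n => rmeet o (f n) g)); [apply E_bv_is_sup|].
    apply (is_sup_cons o Ho) with (E_bv o g (fun n => f (S n))); [apply E_bv_is_sup | reflexivity].
  - intros g u f; apply E_bv_is_sup.
    intros n; apply rle_trans with (rmeet o (f n) u); [exact Ho | apply rmeet_lel, Ho | apply rmeet_ler, Ho].
Qed.

End SigmaCompleteRieszSpace.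

Lemma sigma_continuous_V_hom {X Y} (oX : RieszOps X) (oY : RieszOps Y) h :
  is_riesz_space oX -> sigma_complete oX -> is_riesz_space oY -> sigma_complete oY ->
  riesz_morphism oX oY h -> sigma_continuous oX oY h ->
  V_hom oX (E_bv oX) oY (E_bv oY) h.
Proof.
  intros HX HcX HY HcY (h_add & h_scale & h_join & h_meet) h_cont.
  repeat split; auto.
  - apply (additive_zero oX oY HX HY h h_add).
  - apply (additive_opp oX oY HX HY h h_add).
  - intros g f; apply (is_sup_unique oY HY (fun n => rmeet oY (h (f n)) (h g)));
      [| apply E_bv_is_sup; assumption].
    rewrite <- (functional_extensionality _ _ (fun n => h_meet (f n) g)).
    apply h_cont, E_bv_is_sup; assumption.
Qed.

Lemma E_bv_of_V_algebra {X} (o : RieszOps X) bv : is_V_algebra o bv -> E_bv o = bv.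
Proof.
  intros HV; apply functional_extensionality; intros g; apply functional_extensionality; intros f.
  apply (is_sup_unique o (proj1 HV) (fun n => rmeet o (f n) g)); [| apply V_bv_is_sup, HV].
  apply E_bv_is_sup; [apply HV | apply (V_algebra_sigma_complete o bv HV)].
Qed.

Theorem mainTheorem3 :
  (* T well defined on objects *)
  (forall (X : Type) (o : RieszOps X) (bv : BvOp X),
      is_V_algebra o bv -> is_riesz_space o /\ sigma_complete o) /\
  (* T well defined on maps *)
  (forall (X Y : Type) (oX : RieszOps X) (bvX : BvOp X) (oY : RieszOps Y) (bvY : BvOp Y)
      (h : X -> Y),
      is_V_algebra oX bvX -> is_V_algebra oY bvY -> V_hom oX bvX oY bvY h ->
      riesz_morphism oX oY h /\ sigma_continuous oX oY h) /\
  (* E well defined on objects (the defining suprema exist) *)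
  (forall (X : Type) (o : RieszOps X),
      is_riesz_space o -> sigma_complete o ->
      (forall g f, is_sup o (fun n => rmeet o (f n) g) (E_bv o g f)) /\
      is_V_algebra o (E_bv o)) /\
  (* E well defined on maps *)
  (forall (X Y : Type) (oX : RieszOps X) (oY : RieszOps Y) (h : X -> Y),
      is_riesz_space oX -> sigma_complete oX ->
      is_riesz_space oY -> sigma_complete oY ->
      riesz_morphism oX oY h -> sigma_continuous oX oY h ->
      V_hom oX (E_bv oX) oY (E_bv oY) h) /\
  (* E (T A) = A *)
  (forall (X : Type) (o : RieszOps X) (bv : BvOp X),
      is_V_algebra o bv -> E_bv o = bv).
Proof.
  split; [| split; [| split; [| split]]].
  - intros X o bv HV; split; [apply HV | apply (V_algebra_sigma_complete o bv HV)].
  - intros X Y oX bvX oY bvY h HX HY Hh; split.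
    + destruct Hh as (_ & h_add & _ & h_join & h_meet & h_scale & _); repeat split; assumption.
    + apply (V_hom_sigma_continuous oX bvX oY bvY h HX HY Hh).
  - intros X o Ho Hc; split; [apply (E_bv_is_sup o Ho Hc) | apply (E_V_algebra o Ho Hc)].
  - exact @sigma_continuous_V_hom.
  - exact @E_bv_of_V_algebra.
Qed.
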